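(* Let $\mathbb A_1,\mathbb A_2\in\mathcal K$, let $R$ be a subdirect product of $\mathbb A_1\times\mathbb A_2$, and let $B,C$ be maximal components (respectively as-components, u-maximal components) of $\mathbb A_1,\mathbb A_2$ such that $B\times C\subseteq R$. Then $B\times C$ is a maximal component (respectively as-component, u-maximal component) of $R$.
   Context: All algebras are finite and idempotent; $\mathrm{Sg}(B)$ denotes the subalgebra generated by a set $B$. Edges: for elements $a,b$ of an algebra $\mathbb A$ let $\mathbb B=\mathrm{Sg}(a,b)$. The pair $ab$ is an edge if there is a maximal congruence $\theta$ of $\mathbb B$ such that either $\mathbb B/\theta$ is a set (unary type), or $\mathbb B/\theta$ is term equivalent to the full idempotent reduct of a module and some term operation $f$ induces on $\mathbb B/\theta$ the affine operation $x-y+z$ (affine type), or some term operation $f$ with $f/\theta$ a semilattice operation on $\{a/\theta,b/\theta\}$, or one with $f/\theta$ a majority operation on $\{a/\theta,b/\theta\}$. Semilattice type: the semilattice option holds for some $\theta$; majority type: not semilattice type and the majority option holds for some $\theta$; $\{a/\theta,b/\theta\}$ is a thick edge. $\mathbb A$ is smooth if for every edge $ab$ of semilattice or majority type with witness $\theta$, $a/\theta\cup b/\theta$ is a subalgebra. Standing assumption: $\mathcal K$ is a fixed finite class of similar smooth idempotent algebras, closed under subalgebras and homomorphic images, with no edges of unary type; term operations act coordinatewise on products, and all notions below are taken with respect to $\mathcal K$. Fixed binary term $\cdot$: semilattice operation on every thick semilattice edge of every algebra in $\mathcal K$, and for all $a,b$ either $a\cdot b=a$ or $(a,a\cdot b)$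 is a thin semilattice edge. A thin semilattice edge is a pair $ab$ with $a\cdot b=b\cdot a=b$. A ternary term $g'$ satisfies the majority condition if $g'(x,g'(x,y,y),g'(x,y,y))=g'(x,y,y)$ in $\mathcal K$ and $g'$ is a majority operation on every thick majority edge of every algebra in $\mathcal K$. A ternary term $h'$ satisfies the minority condition if $h'(h'(x,y,y),y,y)=h'(x,y,y)$ in $\mathcal K$ and $h'$ induces the affine operation on $\mathrm{Sg}(a,b)/\theta$ for every affine edge $ab$ with witness $\theta$; such an $h$ is fixed. A (directed) pair $ab$ is a thin majority edge if for every $g'$ satisfying the majority condition each of $\mathrm{Sg}(a,g'(a,b,b))$, $\mathrm{Sg}(a,g'(b,a,b))$, $\mathrm{Sg}(a,g'(b,b,a))$ contains $b$. A pair $ab$ is a thin affine edge if $h(b,a,a)=b$ and $b\in\mathrm{Sg}(a,h'(a,a,b))$ for every $h'$ satisfying the minority condition. A path is a sequence $a_0,\dots,a_k$ where each $a_{i-1}a_i$ is a thin edge; it is an s-path if all are thin semilattice edges, an as-path if all are thin semilattice or thin affine edges, an asm-path in general. $a\sqsubseteq b$, $a\sqsubseteq^{as}b$, $a\sqsubseteq^{asm}b$ mean there is an s-, as-, asm-path from $a$ to $b$. $a$ is maximal (as-maximal, u-maximal) if $a\sqsubseteq b$ implies $b\sqsubseteq a$ (resp. the same with $\sqsubseteq^{as}$, $\sqsubseteq^{asm}$). A maximal component (as-component, u-maximal component) is the strongly connected component of a maximal (as-maximal, u-maximal) element in the digraph of thin semilattice edges (resp. thin semilattice and affine edges; all thin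 edges). *)

From HB Require Import structures.
From mathcomp Require Import all_boot all_order all_algebra.
Set Implicit Arguments. Unset Strict Implicit. Unset Printing Implicit Defensive.
Import GRing.Theory.
Local Open Scope ring_scope.

Record signature := Signature { symb : Type; ar : symb -> nat }.

Section Alg.
Variable L : signature.

Record alg := Alg { carrier :> finType;
                    op : forall f : symb L, ('I_(ar f) -> carrier) -> carrier }.

Inductive term (V : Type) : Type :=
| Var : V -> term V
| App : forall f : symb L, ('I_(ar f) -> term V) -> term V.

Fixpoint teval (A : alg) (V : Type) (e : V -> A) (t : term V) : A :=
  match t with
  | Var v => e v
  | App f ts => @op A f (fun i => teval e (ts i))
  end.

Definition bin (A : alg) (t : term 'I_2) (x y : A) : A :=
  teval (fun i : 'I_2 => if val i == 0%N then x else y) t.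
Definition ter (A : alg) (t : term 'I_3) (x y z : A) : A :=
  teval (fun i : 'I_3 => nth x [:: x; y; z] (val i)) t.

Definition idempotent (A : alg) : Prop :=
  forall (f : symb L) (x : A), @op A f (fun _ => x) = x.

Definition hom (A B : alg) (h : A -> B) : Prop :=
  forall f (x : 'I_(ar f) -> A), h (@op A f x) = @op B f (fun i => h (x i)).
Definition iso (A B : alg) : Prop :=
  exists h : A -> B, hom h /\ bijective h.

Definition closedP (A : alg) (S : A -> Prop) : Prop :=
  forall f (x : 'I_(ar f) -> A), (forall i, S (x i)) -> S (@op A f x).
Definition subuniv (A : alg) (S : {set A}) : Prop := closedP (fun x => x \in S).

Definition Sg (A : alg) (X : A -> Prop) : A -> Prop :=
  fun x => forall S : {set A}, subuniv S -> (forall y, X y -> y \in S) -> x \in S.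
Definition Sg2 (A : alg) (a b : A) : A -> Prop := Sg (fun x => x = a \/ x = b).

Definition prod_alg (A1 A2 : alg) : alg :=
  @Alg (A1 * A2)%type
    (fun f x => (@op A1 f (fun i => (x i).1), @op A2 f (fun i => (x i).2))).

Definition subalg (A : alg) (S : {set A}) (hS : subuniv S) : alg :=
  @Alg {x : A | x \in S}
    (fun f x => exist _ (@op A f (fun i => val (x i))) (hS f _ (fun i => valP (x i)))).

Definition cong (A : alg) (S : A -> Prop) (th : A -> A -> Prop) : Prop :=
  [/\ forall x y, th x y -> S x /\ S y,
      forall x, S x -> th x x,
      forall x y, th x y -> th y x,
      forall x y z, th x y -> th y z -> th x z &
      forall f (x y : 'I_(ar f) -> A),
        (forall i, S (x i) /\ S (y i) /\ th (x i) (y i)) -> th (@op A f x) (@op A f y)].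

Definition maxcong (A : alg) (S : A -> Prop) (th : A -> A -> Prop) : Prop :=
  [/\ cong S th,
      exists x y, [/\ S x, S y & ~ th x y] &
      forall th', cong S th' -> (forall x y, th x y -> th' x y) ->
        (forall x y, th' x y -> th x y) \/ (forall x y, S x -> S y -> th' x y)].

(* S/th is a set: every term operation is a projection modulo th *)
Definition set_quot (A : alg) (S : A -> Prop) (th : A -> A -> Prop) : Prop :=
  forall (n : nat) (t : term 'I_n), exists i : 'I_n,
    forall e : 'I_n -> A, (forall j, S (e j)) -> th (teval e t) (e i).

(* S/th is term equivalent to the full idempotent reduct of a module (via phi),
   and the ternary operation F induces x - y + z on S/th *)
Definition affine_via (A : alg) (S : A -> Prop) (th : A -> A -> Prop)
  (F : A -> A -> A -> A) : Prop :=
  exists (R : nzRingType) (M : lmodType R) (phi : A -> M),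
  [/\ forall x y, S x -> S y -> (th x y <-> phi x = phi y),
      forall m : M, exists x, S x /\ phi x = m,
      forall (n : nat) (t : term 'I_n), exists r : 'I_n -> R,
        \sum_i r i = 1 /\
        forall e : 'I_n -> A, (forall j, S (e j)) ->
          phi (teval e t) = \sum_i r i *: phi (e i),
      forall (n : nat) (r : 'I_n -> R), \sum_i r i = 1 ->
        exists t : term 'I_n, forall e : 'I_n -> A, (forall j, S (e j)) ->
          phi (teval e t) = \sum_i r i *: phi (e i) &
      forall x y z, S x -> S y -> S z -> phi (F x y z) = phi x - phi y + phi z].

Definition semilat_on (A : alg) (th : A -> A -> Prop) (F : A -> A -> A) (a b : A) : Prop :=
  let P := fun u => u = a \/ u = b in
  [/\ forall x y, P x -> P y -> th (F x y) a \/ th (F x y) b,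
      forall x, P x -> th (F x x) x,
      forall x y, P x -> P y -> th (F x y) (F y x) &
      forall x y z, P x -> P y -> P z -> th (F (F x y) z) (F x (F y z))].

Definition majority_on (A : alg) (th : A -> A -> Prop) (M : A -> A -> A -> A) (a b : A) : Prop :=
  let P := fun u => u = a \/ u = b in
  forall x y, P x -> P y ->
    [/\ th (M x x y) x, th (M x y x) x & th (M y x x) x].

Definition unary_opt (A : alg) (a b : A) th := set_quot (Sg2 a b) th.
Definition affine_opt (A : alg) (a b : A) th :=
  exists f : term 'I_3, affine_via (Sg2 a b) th (ter f).
Definition semilat_opt (A : alg) (a b : A) th :=
  exists f : term 'I_2, semilat_on th (bin f) a b.
Definition majority_opt (A : alg) (a b : A) th :=
  exists f : term 'I_3, majority_on th (ter f) a b.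

Definition edge (A : alg) (a b : A) : Prop :=
  exists th, maxcong (Sg2 a b) th /\
    [\/ unary_opt a b th, affine_opt a b th, semilat_opt a b th | majority_opt a b th].

Definition unary_type (A : alg) (a b : A) : Prop :=
  exists th, maxcong (Sg2 a b) th /\ unary_opt a b th.
Definition semilat_type (A : alg) (a b : A) : Prop :=
  exists th, maxcong (Sg2 a b) th /\ semilat_opt a b th.
Definition majority_type (A : alg) (a b : A) : Prop :=
  ~ semilat_type a b /\ exists th, maxcong (Sg2 a b) th /\ majority_opt a b th.

Definition semilat_witness (A : alg) (a b : A) th :=
  maxcong (Sg2 a b) th /\ semilat_opt a b th.
Definition majority_witness (A : alg) (a b : A) th :=
  [/\ majority_type a b, maxcong (Sg2 a b) th & majority_opt a b th].
Definition affine_witness (A : alg) (a b : A) th :=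
  maxcong (Sg2 a b) th /\ affine_opt a b th.

Definition smooth (A : alg) : Prop :=
  forall (a b : A) th, semilat_witness a b th \/ majority_witness a b th ->
    closedP (fun x => Sg2 a b x /\ (th x a \/ th x b)).

Definition finite_class (K : alg -> Prop) : Prop :=
  exists (n : nat) (F : 'I_n -> alg), forall A, K A -> exists i, iso A (F i).

Definition standing (K : alg -> Prop) : Prop :=
  [/\ finite_class K,
      forall A, K A -> [/\ idempotent A, smooth A & forall a b : A, ~ unary_type a b],
      forall (A B : alg) (h : B -> A), K A -> hom h -> injective h -> K B &
      forall (A B : alg) (h : A -> B), K A -> hom h -> (forall y, exists x, h x = y) -> K B].

Definition dot_term (K : alg -> Prop) (dot : term 'I_2) : Prop :=
  (forall A, K A -> forall (a b : A) th, semilat_witness a b th ->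
      semilat_on th (bin dot) a b) /\
  (forall A, K A -> forall a b : A,
      bin dot a b = a \/
      (bin dot a (bin dot a b) = bin dot a b /\ bin dot (bin dot a b) a = bin dot a b)).

Definition majority_cond (K : alg -> Prop) (g : term 'I_3) : Prop :=
  (forall A, K A -> forall x y : A, ter g x (ter g x y y) (ter g x y y) = ter g x y y) /\
  (forall A, K A -> forall (a b : A) th, majority_witness a b th ->
      majority_on th (ter g) a b).

Definition minority_cond (K : alg -> Prop) (h : term 'I_3) : Prop :=
  (forall A, K A -> forall x y : A, ter h (ter h x y y) y y = ter h x y y) /\
  (forall A, K A -> forall (a b : A) th, affine_witness a b th ->
      affine_via (Sg2 a b) th (ter h)).

Definition thin_s (dot : term 'I_2) (A : alg) (a b : A) : Prop :=
  bin dot a b = b /\ bin dot b a = b.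

Definition thin_m (K : alg -> Prop) (A : alg) (a b : A) : Prop :=
  forall g, majority_cond K g ->
    [/\ Sg2 a (ter g a b b) b, Sg2 a (ter g b a b) b & Sg2 a (ter g b b a) b].

Definition thin_a (K : alg -> Prop) (h : term 'I_3) (A : alg) (a b : A) : Prop :=
  ter h b a a = b /\ forall h', minority_cond K h' -> Sg2 a (ter h' a a b) b.

Inductive reach (A : Type) (E : A -> A -> Prop) : A -> A -> Prop :=
| reach_refl : forall a, reach E a a
| reach_step : forall a b c, E a b -> reach E b c -> reach E a c.

Inductive kind := KS | KAS | KASM.

Definition thin_rel (K : alg -> Prop) (dot : term 'I_2) (h : term 'I_3) (k : kind)
  (A : alg) (a b : A) : Prop :=
  match k with
  | KS => thin_s dot a b
  | KAS => thin_s dot a b \/ thin_a K h a b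
  | KASM => [\/ thin_s dot a b, thin_a K h a b | thin_m K a b]
  end.

Definition le_kind K dot h k (A : alg) : A -> A -> Prop := reach (@thin_rel K dot h k A).

(* maximal (k = KS), as-maximal (KAS), u-maximal (KASM) elements *)
Definition kmaximal K dot h k (A : alg) (a : A) : Prop :=
  forall b, le_kind K dot h k a b -> le_kind K dot h k b a.

Definition kcomponent K dot h k (A : alg) (B : {set A}) : Prop :=
  exists a : A, kmaximal K dot h k a /\
    forall b, b \in B <-> (le_kind K dot h k a b /\ le_kind K dot h k b a).

End Alg.

From Pilot Require Import Defs.
From mathcomp Require Import all_boot all_order all_algebra.
From Stdlib Require Import FunctionalExtensionality.
Set Implicit Arguments. Unset Strict Implicit. Unset Printing Implicit Defensive.

(* The argument rests on two transfer principles for thin edges: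
   - homomorphisms preserve thin edges (of every kind), because they commute
     with term operations and map Sg(a,b) into Sg(phi a, phi b); hence the
     projections of R map k-paths of R to k-paths of A1 and A2;
   - conversely, an injective homomorphism defined on a subuniverse P reflects
     thin edges between elements of P.
   Since A2 is idempotent, each fibre {r in R | r.2 = c} is a subuniverse on
   which the first projection is injective, so a k-path of A1 inside B lifts to
   a k-path of R inside the fibre over any c in C (and symmetrically).
   A k-component is closed upwards under k-paths and strongly connected, so
   B x C is strongly connected in R (move along the first coordinate, then the
   second) and closed upwards in R (project a path and use upward closure of B
   and C). *)

Section TermOperations.
Variable L : signature.

Lemma teval_ext (A : alg L) V (e e' : V -> A) (t : term L V) :
  (forall v, e v = e' v) -> teval e t = teval e' t.
Proof. by move=> ee'; rewrite (functional_extensionality _ _ ee'). Qed.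

Lemma hom_teval (A B : alg L) (phi : A -> B) (Hphi : Defs.hom phi) V (e : V -> A) t :
  phi (teval e t) = teval (fun v => phi (e v)) t.
Proof.
elim: t => [v|f ts IH] //=.
by rewrite Hphi; congr (op _); apply: functional_extensionality => i; apply: IH.
Qed.

Lemma hom_bin (A B : alg L) (phi : A -> B) (Hphi : Defs.hom phi) t x y :
  phi (bin t x y) = bin t (phi x) (phi y).
Proof. by rewrite /bin (hom_teval Hphi); apply: teval_ext => -[[|i] ?]. Qed.

Lemma hom_ter (A B : alg L) (phi : A -> B) (Hphi : Defs.hom phi) t x y z :
  phi (ter t x y z) = ter t (phi x) (phi y) (phi z).
Proof. by rewrite /ter (hom_teval Hphi); apply: teval_ext => -[[|[|[|i]]] ?]. Qed.

Lemma closed_teval (A : alg L) (P : A -> Prop) V (e : V -> A) t :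
  closedP P -> (forall v, P (e v)) -> P (teval e t).
Proof. by move=> clP Pe; elim: t => [v|f ts IH] //=; apply: clP. Qed.

Lemma closed_bin (A : alg L) (P : A -> Prop) t x y :
  closedP P -> P x -> P y -> P (bin t x y).
Proof. by move=> clP Px Py; apply: closed_teval => // -[[|i] ?]. Qed.

Lemma closed_ter (A : alg L) (P : A -> Prop) t x y z :
  closedP P -> P x -> P y -> P z -> P (ter t x y z).
Proof. by move=> clP Px Py Pz; apply: closed_teval => // -[[|[|[|i]]] ?]. Qed.

Lemma fibre_closed (A B : alg L) (psi : A -> B) (c : B) :
  Defs.hom psi -> Defs.idempotent B -> closedP (fun x => psi x == c).
Proof.
move=> Hpsi idB f x Hx; apply/eqP; rewrite Hpsi -(idB f c).
by congr (op _); apply: functional_extensionality => i; apply/eqP.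
Qed.

End TermOperations.

Section TwoGenerated.
Variable L : signature.

Lemma Sg2_hom (A B : alg L) (phi : A -> B) (Hphi : Defs.hom phi) a b x :
  Sg2 a b x -> Sg2 (phi a) (phi b) (phi x).
Proof.
move=> Hx S HS HabS.
have preS : subuniv [set u | phi u \in S].
  by move=> f y Hy; rewrite inE Hphi; apply: HS => i; have := Hy i; rewrite inE.
have := Hx _ preS; rewrite inE; apply=> y [->|->]; rewrite inE; apply: HabS; by [left|right].
Qed.

(* An injective homomorphism on a subuniverse P reflects membership in
   Sg(a,b) for elements of P: the image of S /\ P is a subuniverse of B. *)
Lemma Sg2_reflect (A B : alg L) (phi : A -> B) (Hphi : Defs.hom phi) (P : pred A) a b x :
  closedP (fun u => P u) -> {in P &, injective phi} -> P a -> P b -> P x ->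
  Sg2 (phi a) (phi b) (phi x) -> Sg2 a b x.
Proof.
move=> clP injP Pa Pb Px Hx S HS HabS.
pose SP := S :&: [set u | P u].
have SP_closed : subuniv SP.
  move=> f y Hy; rewrite !inE; apply/andP; split; [apply: HS | apply: clP] => i;
    by have := Hy i; rewrite !inE => /andP[].
have image_closed : subuniv (phi @: SP).
  move=> f y Hy; have [q SPq Eq] := fin_all_exists2 (fun i => imsetP (Hy i)).
  rewrite (functional_extensionality _ _ Eq) -Hphi; exact/imset_f/SP_closed.
have : phi x \in phi @: SP.
  apply: (Hx _ image_closed) => y [->|->]; apply: imset_f;
    rewrite !inE ?Pa ?Pb andbT; apply: HabS; by [left|right].
by case/imsetP => u; rewrite !inE => /andP[Su Pu] /(injP _ _ Px Pu) ->.
Qed.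

End TwoGenerated.

Section ThinEdges.
Variables (L : signature) (K : alg L -> Prop) (dot : term L 'I_2) (h : term L 'I_3).
Variable k : kind.

Notation thin := (thin_rel K dot h k).
Notation le := (le_kind K dot h k).

Lemma thin_rel_transfer (A B : alg L) (a b : A) (a' b' : B) :
  (thin_s dot a b -> thin_s dot a' b') -> (thin_a K h a b -> thin_a K h a' b') ->
  (thin_m K a b -> thin_m K a' b') -> thin a b -> thin a' b'.
Proof.
move=> Ts Ta Tm; case: k => /=; first exact: Ts.
  by case=> [/Ts|/Ta]; [left|right].
by case=> [/Ts|/Ta|/Tm]; [apply: Or31|apply: Or32|apply: Or33].
Qed.

Lemma thin_hom (A B : alg L) (phi : A -> B) (Hphi : Defs.hom phi) a b :
  thin a b -> thin (phi a) (phi b).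
Proof.
apply: thin_rel_transfer.
- by case=> ab ba; split; rewrite -(hom_bin Hphi) ?ab ?ba.
- case=> bab Sg_h; split; first by rewrite -(hom_ter Hphi) bab.
  by move=> h' Hh'; rewrite -(hom_ter Hphi); apply: Sg2_hom (Sg_h _ Hh').
- move=> Sg_g g Hg; have [X Y Z] := Sg_g g Hg.
  by split; rewrite -(hom_ter Hphi); apply: Sg2_hom.
Qed.

Lemma thin_reflect (A B : alg L) (phi : A -> B) (Hphi : Defs.hom phi) (P : pred A) a b :
  closedP (fun u => P u) -> {in P &, injective phi} -> P a -> P b ->
  thin (phi a) (phi b) -> thin a b.
Proof.
move=> clP injP Pa Pb.
have ter_in t x y z : P x -> P y -> P z -> ter t x y z \in P.
  exact: (@closed_ter _ _ (fun u => P u)).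
have bin_in t x y : P x -> P y -> bin t x y \in P.
  exact: (@closed_bin _ _ (fun u => P u)).
apply: thin_rel_transfer.
- case=> ab ba; split; apply: injP; rewrite ?bin_in // (hom_bin Hphi) ?ab ?ba //.
- case=> bab Sg_h; split.
    by apply: injP; rewrite ?ter_in // (hom_ter Hphi) bab.
  move=> h' Hh'; apply: (Sg2_reflect Hphi clP injP) => //; first exact: ter_in.
  by rewrite (hom_ter Hphi); apply: Sg_h.
- move=> Sg_g g Hg; have [X Y Z] := Sg_g g Hg.
  by split; apply: (Sg2_reflect Hphi clP injP) => //;
    rewrite ?(hom_ter Hphi) //; exact: ter_in.
Qed.

Lemma le_trans (A : alg L) (a b c : A) : le a b -> le b c -> le a c.
Proof. by elim=> // x y z xy _ IH /IH; apply: reach_step. Qed.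

Lemma le_thin (A : alg L) (a b : A) : thin a b -> le a b.
Proof. by move=> ab; apply: reach_step ab (reach_refl _ _). Qed.

Lemma le_hom (A B : alg L) (phi : A -> B) (Hphi : Defs.hom phi) a b :
  le a b -> le (phi a) (phi b).
Proof.
elim=> [x|x y z xy _ IH]; first exact: reach_refl.
exact: reach_step (thin_hom Hphi xy) IH.
Qed.

Lemma le_lift_fibre (A A1 A2 : alg L) (phi : A -> A1) (psi : A -> A2) (c : A2)
    (U : A1 -> Prop) :
  Defs.hom phi -> Defs.hom psi -> Defs.idempotent A2 ->
  (forall x y, phi x = phi y -> psi x = psi y -> x = y) ->
  (forall u v, U u -> le u v -> U v) ->
  (forall u, U u -> exists x, phi x = u /\ psi x = c) ->
  forall x y, psi x = c -> psi y = c -> U (phi x) -> le (phi x) (phi y) -> le x y.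
Proof.
move=> Hphi Hpsi idA2 joint_inj U_up U_lift x y xc yc Ux.
pose F := fun z => psi z == c.
have F_closed : closedP (fun z => F z) by apply: fibre_closed.
have F_inj : {in F &, injective phi}.
  by move=> z w /eqP zc /eqP wc zw; apply: joint_inj; rewrite ?zc ?wc.
have lift u v : le u v -> forall x, phi x = u -> psi x = c -> U u -> phi y = v -> le x y.
  elim: u v / => [u | u w v uw _ IH] x' x'u x'c Uu yv.
    have -> : x' = y by apply: joint_inj; rewrite ?x'u ?yv ?x'c ?yc.
    exact: reach_refl.
  have Uw : U w := U_up _ _ Uu (le_thin uw).
  have [z [zw zc]] := U_lift w Uw.
  apply: reach_step (IH z zw zc Uw yv).
  by apply: (thin_reflect Hphi F_closed F_inj); [exact/eqP | exact/eqP | rewrite x'u zw].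
by move=> le_xy; apply: (lift _ _ le_xy x).
Qed.

End ThinEdges.

Section Components.
Variables (L : signature) (K : alg L -> Prop) (dot : term L 'I_2) (h : term L 'I_3).
Variables (k : kind) (A : alg L).

Notation le := (le_kind K dot h k).
Notation component := (kcomponent K dot h k).

(* A k-component is upward closed under k-paths (it contains a maximal element). *)
Lemma component_up (B : {set A}) b z : component B -> b \in B -> le b z -> z \in B.
Proof.
case=> a [max_a memB] /memB [ab _] bz; have az := le_trans ab bz.
by apply/memB; split; last exact: max_a.
Qed.

Lemma component_connected (B : {set A}) b b' :
  component B -> b \in B -> b' \in B -> le b b'.
Proof. by case=> a [_ memB] /memB [_ ba] /memB [ab' _]; apply: le_trans ba ab'. Qed.

Lemma component_nonempty (B : {set A}) : component B -> exists b, b \in B.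
Proof. by case=> a [_ memB]; exists a; apply/memB; split; apply: reach_refl. Qed.

(* Conversely, a nonempty, strongly connected, upward closed set is a k-component;
   any of its elements is a k-maximal element generating it. *)
Lemma component_intro (D : {set A}) :
  (exists d, d \in D) -> (forall d d', d \in D -> d' \in D -> le d d') ->
  (forall d z, d \in D -> le d z -> z \in D) -> component D.
Proof.
move=> [d dD] D_conn D_up; exists d; split.
  by move=> z dz; apply: D_conn; first exact: D_up dz.
by move=> z; split=> [zD | [dz _]]; [split; apply: D_conn | apply: D_up dz].
Qed.

End Components.

Section Rectangles.
Variables (L : signature) (K : alg L -> Prop) (dot : term L 'I_2) (h : term L 'I_3).
Variables (k : kind) (A1 A2 : alg L).
Hypotheses (idA1 : Defs.idempotent A1) (idA2 : Defs.idempotent A2).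
Variables (R : {set prod_alg A1 A2}) (HR : subuniv R).
Variables (B : {set A1}) (C : {set A2}).
Hypotheses (HB : kcomponent K dot h k B) (HC : kcomponent K dot h k C).
Hypothesis HBC : forall b c, b \in B -> c \in C -> ((b, c) : prod_alg A1 A2) \in R.

Notation le := (le_kind K dot h k).
Notation Rg := (subalg HR).

Let pr1 (r : Rg) : A1 := (val r).1.
Let pr2 (r : Rg) : A2 := (val r).2.

Lemma pr1_hom : Defs.hom pr1. Proof. by []. Qed.
Lemma pr2_hom : Defs.hom pr2. Proof. by []. Qed.

Lemma pr_inj r s : pr1 r = pr1 s -> pr2 r = pr2 s -> r = s.
Proof. by move=> E1 E2; apply: val_inj; apply: injective_projections. Qed.

Definition rect_pt b c (bB : b \in B) (cC : c \in C) : Rg := exist _ (b, c) (HBC bB cC).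

Definition rect : {set Rg} := [set r : Rg | (pr1 r \in B) && (pr2 r \in C)].

Lemma rect_move1 r s : r \in rect -> s \in rect -> pr2 r = pr2 s -> le r s.
Proof.
rewrite !inE => /andP [rB rC] /andP [sB _] rs.
apply: (le_lift_fibre (U := fun u => u \in B) pr1_hom pr2_hom idA2 pr_inj) => //.
- by move=> u v uB; apply: component_up HB uB.
- by move=> u uB; exists (rect_pt uB rC).
- exact: component_connected HB rB sB.
Qed.

Lemma rect_move2 r s : r \in rect -> s \in rect -> pr1 r = pr1 s -> le r s.
Proof.
rewrite !inE => /andP [rB rC] /andP [_ sC] rs.
apply: (le_lift_fibre (U := fun u => u \in C) pr2_hom pr1_hom idA1
  (fun x y E2 E1 => pr_inj E1 E2)) => //.
- by move=> u v uC; apply: component_up HC uC.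
- by move=> u uC; exists (rect_pt rB uC).
- exact: component_connected HC rC sC.
Qed.

Lemma rect_connected r s : r \in rect -> s \in rect -> le r s.
Proof.
move=> rD sD; move: (rD) (sD); rewrite !inE => /andP [_ rC] /andP [sB _].
have mD : rect_pt sB rC \in rect by rewrite inE sB rC.
by apply: (le_trans (rect_move1 rD mD _)) (rect_move2 mD sD _).
Qed.

Lemma rect_up r s : r \in rect -> le r s -> s \in rect.
Proof.
rewrite !inE => /andP [rB rC] rs; apply/andP; split.
  exact: component_up HB rB (le_hom pr1_hom rs).
exact: component_up HC rC (le_hom pr2_hom rs).
Qed.

Lemma rect_nonempty : exists r, r \in rect.
Proof.
have [b bB] := component_nonempty HB; have [c cC] := component_nonempty HC.
by exists (rect_pt bB cC); rewrite inE bB cC.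
Qed.

End Rectangles.

Theorem lemma20 (L : signature) (K : alg L -> Prop)
  (dot : term L 'I_2) (h : term L 'I_3)
  (HK : standing K) (Hdot : dot_term K dot) (Hh : minority_cond K h)
  (k : kind) (A1 A2 : alg L) (HA1 : K A1) (HA2 : K A2)
  (R : {set prod_alg A1 A2}) (HR : subuniv R)
  (HR1 : forall x : A1, exists y : A2, ((x, y) : prod_alg A1 A2) \in R)
  (HR2 : forall y : A2, exists x : A1, ((x, y) : prod_alg A1 A2) \in R)
  (B : {set A1}) (C : {set A2})
  (HB : kcomponent K dot h k B) (HC : kcomponent K dot h k C)
  (HBC : forall (b : A1) (c : A2), b \in B -> c \in C -> ((b, c) : prod_alg A1 A2) \in R) :
  kcomponent K dot h k
    [set r : subalg HR | ((val r).1 \in B) && ((val r).2 \in C)].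
Proof.
have [_ HKalg _ _] := HK.
have [idA1 _ _] := HKalg _ HA1; have [idA2 _ _] := HKalg _ HA2.
change (kcomponent K dot h k (rect HR B C)); apply: component_intro.
- exact: rect_nonempty HB HC HBC.
- move=> r s rD sD; exact (rect_connected idA1 idA2 HB HC HBC rD sD).
- move=> r s rD rs; exact (rect_up HB HC rD rs).
Qed.
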